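(* Let $\mathcal{L}\subset\mathcal{L}_*$ be lineages with hierarchical generators $\mathcal{H},\mathcal{H}_*$, $\mathcal{R}=\mathcal{L}_*\setminus\mathcal{L}$ and $\mathcal{M}=\mathcal{R}\cap\mathcal{H}$. Then (i) for every $\psi_0\in\mathcal{R}$ there exist $k\ge0$ and $\psi_1,\dots,\psi_k$ such that $\psi_k\in\mathcal{M}$, $\psi_j\in\mathcal{R}\setminus\mathcal{M}$ and $\psi_j\in\mathrm{ch}(\psi_{j+1})$ for $j\in\{0,\dots,k-1\}$; (ii) for every $\varphi_*\in\mathcal{H}_*\setminus\mathcal{H}$ there is $\psi\in\mathcal{R}$ with $\varphi_*\in\mathrm{ch}(\psi)$; (iii) for every $\varphi_*\in\mathcal{H}_*\setminus\mathcal{H}$ there are $k\ge1$ and $\varphi\in\mathcal{M}$ with $\varphi_*\in\mathrm{ch}^k(\varphi)$.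
   Context: Fix integers $d\ge1$, $n\ge2$, $m\ge2$; $s=n-1$, $p=m-1$. B-splines $\varphi^\ell_{\vec i}(\vec x)=\prod_kQ(n^\ell x_k-i_k)$ for $\ell\ge0$, $\vec i\in\mathbb{Z}^d$, $Q$ the uniform B-spline of order $m$ with knots $0,\dots,m$; $\mathfrak{B}$ the set of all of them; $\mathcal{B}^0=\{\varphi^0_{\vec i}:\vec i\in[-p:0]^d\}$. Children $\mathrm{ch}(\varphi^\ell_{\vec i})=\{\varphi^{\ell+1}_{\vec k}:n\vec i\le\vec k\le n\vec i+sm\}$, extended to sets by union, $\mathrm{ch}^k$ the $k$-fold application. A lineage is a finite $\mathcal{L}\subset\mathfrak{B}$ with $\mathcal{L}\subset\mathcal{B}^0\cup\mathrm{ch}(\mathcal{L})$; its hierarchical generator is $(\mathcal{B}^0\cup\mathrm{ch}(\mathcal{L}))\setminus\mathcal{L}$. *)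

From HB Require Import structures.
From mathcomp Require Import all_boot all_order all_algebra.
Set Implicit Arguments. Unset Strict Implicit. Unset Printing Implicit Defensive.
Import Order.TTheory GRing.Theory Num.Theory.

(* A B-spline phi^l_i (for fixed d, n, m) is identified with its pair
   (level l, index vector i in Z^d); distinct pairs give distinct functions
   (their supports [i n^-l, (i+m) n^-l] differ), so this is a faithful encoding. *)
Definition bspl (d : nat) := (nat * {ffun 'I_d -> int})%type.

Local Open Scope ring_scope.

Definition child (d n m : nat) (phi psi : bspl d) : bool :=
  (phi.1 == psi.1.+1)%N &&
  [forall k : 'I_d,
     (n%:Z * psi.2 k <= phi.2 k) &&
     (phi.2 k <= n%:Z * psi.2 k + ((n.-1)%N * m)%N%:Z)].

Definition inB0 (d m : nat) (phi : bspl d) : bool :=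
  (phi.1 == 0)%N &&
  [forall k : 'I_d, (- (m.-1)%:Z <= phi.2 k) && (phi.2 k <= 0)].

Definition inch (d n m : nat) (L : seq (bspl d)) (phi : bspl d) : bool :=
  has (child n m phi) L.

Definition lineage (d n m : nat) (L : seq (bspl d)) : bool :=
  all (fun phi => inB0 m phi || inch n m L phi) L.

Definition inH (d n m : nat) (L : seq (bspl d)) (phi : bspl d) : bool :=
  (inB0 m phi || inch n m L phi) && (phi \notin L).

Fixpoint inchk (d n m : nat) (k : nat) (psi phi : bspl d) : Prop :=
  match k with
  | 0 => phi = psi
  | k'.+1 => exists chi : bspl d, inchk n m k' psi chi /\ child n m phi chi
  end.

From HB Require Import structures.
From mathcomp Require Import all_boot all_order all_algebra.

Set Implicit Arguments.
Unset Strict Implicit.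
Unset Printing Implicit Defensive.

(* Every element of B^0 u ch(L_* ) that is missing from B^0 u ch(L) must be a
   child of some psi in R = L_* \ L.  Starting from psi_0 in R and repeatedly
   passing to such a parent lowers the level, so the walk stops, and it can only
   stop in M = R n H.  Reading the walk backwards exhibits phi_* in ch^k of a
   member of M. *)

Lemma child_level (d n m : nat) (phi psi : bspl d) :
  child n m phi psi -> phi.1 = psi.1.+1.
Proof. by case/andP=> /eqP. Qed.

Lemma inchk_chain (d n m k : nat) (psi : nat -> bspl d) :
  (forall j, (j < k)%N -> child n m (psi j) (psi j.+1)) ->
  inchk n m k (psi k) (psi 0%N).
Proof.
elim: k psi => [|k IH] psi hchain //=.
exists (psi 1%N); split; last exact: hchain.
by apply: (IH (fun j => psi j.+1)) => j hj; apply: hchain.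
Qed.

Section Refinement.
Variables (d n m : nat) (L Ls : seq (bspl d)).

Let inR := fun phi : bspl d => (phi \in Ls) && (phi \notin L).
Let inM := fun phi : bspl d => inR phi && inH n m L phi.

Lemma parent_in_diff (phi : bspl d) :
  inB0 m phi || inch n m Ls phi -> ~~ (inB0 m phi || inch n m L phi) ->
  exists2 psi, inR psi & child n m phi psi.
Proof.
rewrite negb_or => + /andP[notB0 notchL]; rewrite (negbTE notB0) /=.
case/hasP=> psi psiLs hchild; exists psi => //.
rewrite /inR psiLs; apply: contra notchL => psiL.
by apply/hasP; exists psi.
Qed.

Hypothesis hLs : lineage n m Ls.

Lemma parent_in_R (psi : bspl d) : inR psi -> ~~ inM psi ->
  exists2 chi, inR chi & child n m psi chi.
Proof.
move=> hR; rewrite /inM hR /inH /=; case/andP: hR => psiLs ->; rewrite andbT.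
exact/parent_in_diff/(allP hLs).
Qed.

Lemma chain_to_M (psi0 : bspl d) : inR psi0 ->
  exists (k : nat) (psi : nat -> bspl d),
    psi 0%N = psi0 /\ inM (psi k) /\
    (forall j : nat, (j < k)%N ->
       inR (psi j) /\ ~~ inM (psi j) /\ child n m (psi j) (psi j.+1)).
Proof.
move: {2}psi0.1 (leqnn psi0.1) => l; elim: l psi0 => [|l IH] psi0 hl hR;
  case hM: (inM psi0); try by exists 0%N, (fun=> psi0).
- have [chi _ /child_level] := parent_in_R hR (negbT hM).
  by move: hl; rewrite leqn0 => /eqP ->.
- have [chi chiR hchild] := parent_in_R hR (negbT hM).
  have chil : (chi.1 <= l)%N by rewrite -ltnS -(child_level hchild).
  have [k [psi [psi0E [hk hchain]]]] := IH chi chil chiR.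
  exists k.+1, (fun j => if j is j'.+1 then psi j' else psi0).
  split=> //; split=> //; case=> [|j] hj /=; last exact: hchain.
  by rewrite psi0E hR hM.
Qed.

Hypothesis hsub : {subset L <= Ls}.

Lemma new_generator_parent (phis : bspl d) :
  inH n m Ls phis -> ~~ inH n m L phis ->
  exists2 psi, inR psi & child n m phis psi.
Proof.
case/andP=> hgen notLs; have notL : phis \notin L by apply: contra notLs; apply: hsub.
by rewrite /inH notL andbT; apply: parent_in_diff.
Qed.

End Refinement.

Theorem lemma5p9 (d n m : nat) (hd : (1 <= d)%N) (hn : (2 <= n)%N) (hm : (2 <= m)%N)
  (L Ls : seq (bspl d))
  (hL : lineage n m L) (hLs : lineage n m Ls) (hsub : {subset L <= Ls}) :
  let inR := fun phi : bspl d => (phi \in Ls) && (phi \notin L) in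
  let inM := fun phi : bspl d => inR phi && inH n m L phi in
  (* (i) *)
  (forall psi0 : bspl d, inR psi0 ->
     exists (k : nat) (psi : nat -> bspl d),
       psi 0%N = psi0 /\ inM (psi k) /\
       (forall j : nat, (j < k)%N ->
          inR (psi j) /\ ~~ inM (psi j) /\ child n m (psi j) (psi j.+1))) /\
  (* (ii) *)
  (forall phis : bspl d, inH n m Ls phis -> ~~ inH n m L phis ->
     exists psi : bspl d, inR psi /\ child n m phis psi) /\
  (* (iii) *)
  (forall phis : bspl d, inH n m Ls phis -> ~~ inH n m L phis ->
     exists (k : nat) (phi : bspl d), (1 <= k)%N /\ inM phi /\ inchk n m k phi phis).
Proof.
move=> inR inM; split; first exact: chain_to_M.
split=> phis hLs' hL'; have [psi0 psi0R hchild] := new_generator_parent hsub hLs' hL'.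
  by exists psi0.
have [k [psi [psi0E [hk hchain]]]] := chain_to_M hLs psi0R.
exists k.+1, (psi k); do 2!split=> //=.
exists psi0; split=> //; rewrite -psi0E.
by apply: inchk_chain => j /hchain[_ []].
Qed.
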